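(* Let $0\le\underline{\sigma}\le\overline{\sigma}<\infty$ and $G(a)=\frac12(\overline{\sigma}^2a^+-\underline{\sigma}^2a^-)$. Let $H\in C^2(\mathbb{R})$ have polynomial growth and satisfy, for some $\rho>0$, \[\frac{x}{2}H'(x)-G(H''(x))=\rho H(x),\qquad x\in\mathbb{R}.\] Then $\mathbb{E}[H(B_1)]=0$, where $B$ is a one-dimensional $G$-Brownian motion under the $G$-expectation $\mathbb{E}$ (equivalently, $\mathcal{N}_G[H]=0$ for the $G$-normal distribution $\mathcal{N}_G$).
   Context: For a continuous function $\psi$ of polynomial growth, $\mathbb{E}[\psi(B_1)]=\mathcal{N}_G[\psi]:=u^\psi(1,0)$, where $u^\psi$ is the (polynomial growth) viscosity solution of the $G$-heat equation $\partial_tu-G(\partial_x^2u)=0$ on $(0,\infty)\times\mathbb{R}$ with $u(0,\cdot)=\psi$. The $G$-Brownian motion is the canonical process on $C_0([0,\infty);\mathbb{R})$ under Peng's $G$-expectation, whose time-1 marginal is the $G$-normal distribution. *)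

From Stdlib Require Import Reals Lra.
From Coquelicot Require Import Coquelicot.
Open Scope R_scope.

Definition Gfun (sl su : R) (a : R) : R :=
  / 2 * (su ^ 2 * Rmax a 0 - sl ^ 2 * Rmax (- a) 0).

Definition poly_growth (f : R -> R) : Prop :=
  exists C : R, exists k : nat, forall x : R, Rabs (f x) <= C * (1 + Rabs x ^ k).

Definition poly_growth2 (u : R -> R -> R) : Prop :=
  forall T : R, exists C : R, exists k : nat,
    forall t x : R, 0 <= t <= T -> Rabs (u t x) <= C * (1 + Rabs x ^ k).

Definition cont_on_half (u : R -> R -> R) : Prop :=
  forall t x : R, 0 <= t ->
    filterlim (fun p : R * R => u (fst p) (snd p))
      (within (fun p : R * R => 0 <= fst p) (locally (t, x)))
      (locally (u t x)).

Definition C12 (phi phit phix phixx : R -> R -> R) : Prop :=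
  (forall t x, is_derive (fun s => phi s x) t (phit t x)) /\
  (forall t x, is_derive (fun y => phi t y) x (phix t x)) /\
  (forall t x, is_derive (fun y => phix t y) x (phixx t x)) /\
  (forall p : R * R, continuous (fun q : R * R => phi (fst q) (snd q)) p) /\
  (forall p : R * R, continuous (fun q : R * R => phit (fst q) (snd q)) p) /\
  (forall p : R * R, continuous (fun q : R * R => phix (fst q) (snd q)) p) /\
  (forall p : R * R, continuous (fun q : R * R => phixx (fst q) (snd q)) p).

Definition visc_sub (G : R -> R) (u : R -> R -> R) : Prop :=
  forall (t x : R) (phi phit phix phixx : R -> R -> R),
    0 < t -> C12 phi phit phix phixx -> phi t x = u t x ->
    (exists d : R, 0 < d /\ forall s y, 0 < s -> Rabs (s - t) < d ->
        Rabs (y - x) < d -> u s y <= phi s y) ->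
    phit t x - G (phixx t x) <= 0.

Definition visc_super (G : R -> R) (u : R -> R -> R) : Prop :=
  forall (t x : R) (phi phit phix phixx : R -> R -> R),
    0 < t -> C12 phi phit phix phixx -> phi t x = u t x ->
    (exists d : R, 0 < d /\ forall s y, 0 < s -> Rabs (s - t) < d ->
        Rabs (y - x) < d -> phi s y <= u s y) ->
    0 <= phit t x - G (phixx t x).

Definition G_heat_solution (G : R -> R) (psi : R -> R) (u : R -> R -> R) : Prop :=
  cont_on_half u /\ poly_growth2 u /\ (forall x, u 0 x = psi x) /\
  visc_sub G u /\ visc_super G u.

(* N_G[psi] = v : the value u^psi(1,0) of the (unique) polynomial-growth
   viscosity solution equals v *)
Definition NG_value (G : R -> R) (psi : R -> R) (v : R) : Prop :=
  forall u, G_heat_solution G psi u -> u 1 0 = v.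

(* For t < 1 the function W(t, x) = (1 - t)^rho H(x / sqrt (1 - t)) solves the G-heat equation
   classically precisely because H solves the given ODE, and W(0, .) = H.  A comparison principle
   between viscosity subsolutions and classical supersolutions of polynomial growth, proved by
   penalizing with exp (lam t) (1 + x^(2k+2)) and maximizing on a compact strip, applied to u, W
   and to -u, -W, gives u = W on [0, 1) x R.  Hence u(t, 0) = (1 - t)^rho H(0) tends to 0 as
   t -> 1, and continuity of u at (1, 0) gives N_G[H] = u(1, 0) = 0. *)

From Stdlib Require Import Reals Lra Lia Rtopology IndefiniteDescription Classical FunctionalExtensionality.
From Coquelicot Require Import Coquelicot.
Open Scope R_scope.

Lemma inv_INR_succ_lt (eps : R) (N n : nat) :
  0 < eps -> / eps < INR N -> (N <= n)%nat -> / (INR n + 1) < eps.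
Proof.
  intros heps hN hn.
  assert (INR N <= INR n) by (apply le_INR; exact hn).
  pose proof (Rinv_0_lt_compat eps heps).
  rewrite <- (Rinv_inv eps).
  apply Rinv_lt_contravar; [apply Rmult_lt_0_compat|]; lra.
Qed.

Lemma exists_rate_above (c A tau : R) : 0 < tau -> exists lam, c < lam /\ A <= lam * tau.
Proof.
  intro htau; pose proof (Rabs_pos c); pose proof (Rle_abs c); pose proof (Rle_abs A).
  assert (0 <= Rabs A / tau) by (apply Rmult_le_pos; [apply Rabs_pos|apply Rlt_le, Rinv_0_lt_compat, htau]).
  exists (Rabs c + Rabs A / tau + 1); split; [lra|].
  replace ((Rabs c + Rabs A / tau + 1) * tau) with ((Rabs c + 1) * tau + Rabs A) by (field; lra).
  assert (0 <= (Rabs c + 1) * tau) by (apply Rmult_le_pos; lra); lra.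
Qed.

Lemma exp_le_compat (x y : R) : x <= y -> exp x <= exp y.
Proof.
  intro h; destruct (Rle_lt_or_eq_dec x y h) as [hlt| ->]; [apply Rlt_le, exp_increasing, hlt|lra].
Qed.

Lemma exp_le_1 (x : R) : x <= 0 -> exp x <= 1.
Proof. intro h; rewrite <- exp_0; apply exp_le_compat, h. Qed.

Lemma Rabs_pow_le_1_plus (x : R) (k m : nat) : (k <= m)%nat -> Rabs x ^ k <= 1 + Rabs x ^ m.
Proof.
  intro hkm; pose proof (Rabs_pos x).
  assert (0 <= Rabs x ^ m) by (apply pow_le; lra).
  destruct (Rle_dec (Rabs x) 1) as [hle|hgt].
  - assert (Rabs x ^ k <= 1 ^ k) by (apply pow_incr; lra); rewrite pow1 in *; lra.
  - assert (Rabs x ^ k <= Rabs x ^ m) by (apply Rle_pow; [lra|exact hkm]); lra.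
Qed.

Lemma pow_even_ge0 (x : R) (m : nat) : 0 <= x ^ (2 * m).
Proof. rewrite pow_mult; apply pow_le; nra. Qed.

Lemma pow_even_Rabs (x : R) (m : nat) : x ^ (2 * m) = Rabs x ^ (2 * m).
Proof. rewrite RPow_abs; symmetry; apply Rabs_right, Rle_ge, pow_even_ge0. Qed.

Lemma pow_SS_double (x : R) (m : nat) : x ^ S (S (2 * m)) = Rabs x ^ S (S (2 * m)).
Proof. replace (S (S (2 * m))) with (2 * S m)%nat by lia; apply pow_even_Rabs. Qed.

Lemma pow_SS_double_ge0 (x : R) (m : nat) : 0 <= x ^ S (S (2 * m)).
Proof. rewrite pow_SS_double; apply pow_le, Rabs_pos. Qed.

Lemma poly_bound_below_higher_power (C eps : R) (k m : nat) (x : R) :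
  0 <= C -> 0 < eps -> (k < m)%nat -> 1 + 2 * C / eps <= Rabs x ->
  C * (1 + Rabs x ^ k) < eps * (1 + Rabs x ^ m).
Proof.
  intros hC heps hkm hx.
  destruct m as [|m]; [lia|].
  set (r := Rabs x) in *.
  assert (h2C : 0 <= 2 * C / eps) by (apply Rmult_le_pos; [lra|apply Rlt_le, Rinv_0_lt_compat; lra]).
  assert (hk : r ^ k <= r ^ m) by (apply Rle_pow; [lra|lia]).
  assert (hk1 : 1 <= r ^ k) by (apply pow_R1_Rle; lra).
  assert (hr : eps * r >= eps + 2 * C).
  { replace (eps + 2 * C) with (eps * (1 + 2 * C / eps)) by (field; lra).
    apply Rle_ge, Rmult_le_compat_l; lra. }
  simpl; nra.
Qed.

Lemma poly_bound_le_even_power (C : R) (k : nat) (x : R) :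
  0 <= C -> C * (1 + Rabs x ^ k) <= 2 * C * (1 + x ^ S (S (2 * k))).
Proof.
  intro hC; rewrite pow_SS_double.
  pose proof (Rabs_pow_le_1_plus x k (S (S (2 * k))) ltac:(lia)).
  assert (0 <= Rabs x ^ S (S (2 * k))) by (apply pow_le, Rabs_pos); nra.
Qed.

(** * Maxima of upper semicontinuous functions on rectangles *)

Definition cluster_point (v : nat -> R) (l : R) : Prop :=
  forall eps, 0 < eps -> forall N, exists n, (N <= n)%nat /\ Rabs (v n - l) < eps.

Lemma segment_cluster_point (v : nat -> R) (a b : R) :
  (forall n, a <= v n <= b) -> exists l, a <= l <= b /\ cluster_point v l.
Proof.
  intros hv.
  destruct (Bolzano_Weierstrass v (fun y => a <= y <= b) (compact_P3 a b) hv) as [l hl].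
  assert (hcl : cluster_point v l).
  { intros eps heps N.
    destruct (hl (disc l (mkposreal eps heps)) N) as [n hn].
    - exists (mkposreal eps heps); intros y hy; exact hy.
    - exists n; exact hn. }
  exists l; split; [|exact hcl].
  split; apply Rnot_lt_le; intro hout.
  - destruct (hcl (a - l) ltac:(lra) 0%nat) as [n [_ hn]].
    specialize (hv n); apply Rabs_def2 in hn; lra.
  - destruct (hcl (l - b) ltac:(lra) 0%nat) as [n [_ hn]].
    specialize (hv n); apply Rabs_def2 in hn; lra.
Qed.

Lemma rectangle_cluster_point (v w : nat -> R) (a b c d : R) :
  (forall n, a <= v n <= b /\ c <= w n <= d) ->
  exists t x, (a <= t <= b /\ c <= x <= d) /\
    forall del, 0 < del -> forall N, exists n,
      (N <= n)%nat /\ Rabs (v n - t) < del /\ Rabs (w n - x) < del.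
Proof.
  intros hvw.
  destruct (segment_cluster_point v a b (fun n => proj1 (hvw n))) as [t [ht hvt]].
  assert (hsub : forall j : nat, exists n, (j <= n)%nat /\ Rabs (v n - t) < / (INR j + 1)).
  { intro j; apply hvt, Rinv_0_lt_compat; pose proof (pos_INR j); lra. }
  destruct (functional_choice _ hsub) as [sigma hsigma].
  destruct (segment_cluster_point (fun j => w (sigma j)) c d (fun j => proj2 (hvw (sigma j))))
    as [x [hx hwx]].
  exists t, x; split; [split; assumption|].
  intros del hdel N.
  destruct (INR_unbounded (/ del)) as [M hM].
  destruct (hwx del hdel (N + M)%nat) as [j [hj hwj]].
  destruct (hsigma j) as [hjn hvj].
  exists (sigma j); split; [lia|split; [|exact hwj]].
  apply Rlt_trans with (1 := hvj).
  apply (inv_INR_succ_lt del M j); [exact hdel|lra|lia].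
Qed.

Section UpperSemicontinuousMaximum.

Variables (f : R -> R -> R) (a b c d : R).

Definition usc_on_rectangle : Prop :=
  forall t x, a <= t <= b -> c <= x <= d -> forall eps, 0 < eps ->
  exists del, 0 < del /\ forall s y, a <= s <= b -> c <= y <= d ->
    Rabs (s - t) < del -> Rabs (y - x) < del -> f s y < f t x + eps.

Hypothesis f_usc : usc_on_rectangle.

Lemma usc_rectangle_limsup (p : nat -> R * R) :
  (forall n, a <= fst (p n) <= b /\ c <= snd (p n) <= d) ->
  exists t x, (a <= t <= b /\ c <= x <= d) /\
    forall eps, 0 < eps -> forall N, exists n,
      (N <= n)%nat /\ f (fst (p n)) (snd (p n)) < f t x + eps.
Proof.
  intros hp.
  destruct (rectangle_cluster_point (fun n => fst (p n)) (fun n => snd (p n)) a b c d hp)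
    as [t [x [[ht hx] hcl]]].
  exists t, x; split; [split; assumption|].
  intros eps heps N.
  destruct (f_usc t x ht hx eps heps) as [del [hdel hf]].
  destruct (hcl del hdel N) as [n [hN [hv hw]]].
  exists n; split; [exact hN|].
  destruct (hp n); apply hf; assumption.
Qed.

Lemma usc_rectangle_max : a <= b -> c <= d ->
  exists t0 x0, (a <= t0 <= b /\ c <= x0 <= d) /\
    forall t x, a <= t <= b -> c <= x <= d -> f t x <= f t0 x0.
Proof.
  intros hab hcd.
  set (img := fun m => exists t x, (a <= t <= b /\ c <= x <= d) /\ m = f t x).
  assert (hbound : bound img).
  { apply NNPP; intro hunb.
    assert (hbig : forall n : nat, exists p : R * R,
      (a <= fst p <= b /\ c <= snd p <= d) /\ INR n < f (fst p) (snd p)).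
    { intro n; apply NNPP; intro hno; apply hunb; exists (INR n).
      intros m [t [x [hin ->]]]; apply Rnot_lt_le; intro hlt; apply hno; exists (t, x); auto. }
    destruct (functional_choice _ hbig) as [p hp].
    destruct (usc_rectangle_limsup p (fun n => proj1 (hp n))) as [t [x [_ hlim]]].
    destruct (INR_unbounded (f t x + 1)) as [N hN].
    destruct (hlim 1 Rlt_0_1 N) as [n [hn hfn]].
    assert (INR N <= INR n) by (apply le_INR; exact hn).
    pose proof (proj2 (hp n)); lra. }
  assert (hne : exists m, img m) by (exists (f a c), a, c; split; [lra|reflexivity]).
  destruct (completeness img hbound hne) as [m [hub hlub]].
  assert (happrox : forall n : nat, exists p : R * R,
    (a <= fst p <= b /\ c <= snd p <= d) /\ m - / (INR n + 1) < f (fst p) (snd p)).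
  { intro n; apply NNPP; intro hno.
    assert (0 < / (INR n + 1)) by (apply Rinv_0_lt_compat; pose proof (pos_INR n); lra).
    enough (m <= m - / (INR n + 1)) by lra.
    apply hlub; intros y [t [x [hin ->]]].
    apply Rnot_lt_le; intro hlt; apply hno; exists (t, x); auto. }
  destruct (functional_choice _ happrox) as [p hp].
  destruct (usc_rectangle_limsup p (fun n => proj1 (hp n))) as [t0 [x0 [hin0 hlim]]].
  exists t0, x0; split; [exact hin0|].
  assert (hm : m <= f t0 x0).
  { apply Rnot_lt_le; intro hlt.
    set (eps := (m - f t0 x0) / 2).
    assert (heps : 0 < eps) by (unfold eps; lra).
    destruct (INR_unbounded (/ eps)) as [N hN].
    destruct (hlim eps heps N) as [n [hn hfn]].
    pose proof (inv_INR_succ_lt eps N n heps hN hn).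
    pose proof (proj2 (hp n)); unfold eps in *; lra. }
  intros t x ht hx; apply Rle_trans with m; [apply hub; exists t, x; auto|exact hm].
Qed.

End UpperSemicontinuousMaximum.

Lemma is_derive_continuous (f : R -> R) (x l : R) : is_derive f x l -> continuous f x.
Proof.
  intro hf; apply (ex_derive_continuous (K := R_AbsRing) (V := R_NormedModule)); exists l; exact hf.
Qed.

Lemma is_derive_affine (f g : R -> R) (a b c y df dg : R) :
  is_derive f y df -> is_derive g y dg ->
  is_derive (fun z => a * f z + b * g z + c) y (a * df + b * dg).
Proof.
  intros hf hg; auto_derive.
  - repeat split; [exists df|exists dg]; assumption.
  - replace (Derive (fun z => f z) y) with df by (symmetry; apply is_derive_unique; exact hf).
    replace (Derive (fun z => g z) y) with dg by (symmetry; apply is_derive_unique; exact hg).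
    ring.
Qed.

Lemma is_derive_glue (f g h : R -> R) (a l : R) :
  (forall t, t <= a -> f t = g t) -> (forall t, a <= t -> f t = h t) ->
  is_derive g a l -> is_derive h a l -> is_derive f a l.
Proof.
  intros hfg hfh dg dh; apply is_derive_Reals; intros eps heps.
  destruct (proj1 (is_derive_Reals _ _ _) dg eps heps) as [d1 hd1].
  destruct (proj1 (is_derive_Reals _ _ _) dh eps heps) as [d2 hd2].
  exists (mkposreal (Rmin d1 d2) (Rmin_pos _ _ (cond_pos d1) (cond_pos d2))); simpl.
  intros e he hed; pose proof (Rmin_l d1 d2); pose proof (Rmin_r d1 d2).
  destruct (Rle_or_lt e 0) as [hneg|hpos].
  - rewrite (hfg a), (hfg (a + e)) by lra; apply hd1; [exact he|lra].
  - rewrite (hfh a), (hfh (a + e)) by lra; apply hd2; [exact he|lra].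
Qed.

Lemma continuous_Rmin_r (a t : R) : continuous (fun s => Rmin s a) t.
Proof.
  apply filterlim_locally; intro eps; exists eps; intros s hs.
  change (Rabs (s - t) < eps) in hs; change (Rabs (Rmin s a - Rmin t a) < eps).
  apply Rabs_def2 in hs; apply Rabs_def1; unfold Rmin; destruct (Rle_dec s a), (Rle_dec t a); lra.
Qed.

Definition cont2 (f : R -> R -> R) (p : R * R) : Prop :=
  continuous (fun q : R * R => f (fst q) (snd q)) p.

Lemma cont2_plus f g p : cont2 f p -> cont2 g p -> cont2 (fun t x => f t x + g t x) p.
Proof. intros hf hg; exact (continuous_plus _ _ p hf hg). Qed.

Lemma cont2_mult f g p : cont2 f p -> cont2 g p -> cont2 (fun t x => f t x * g t x) p.
Proof. intros hf hg; exact (continuous_mult _ _ p hf hg). Qed.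

Lemma cont2_const (c : R) p : cont2 (fun _ _ => c) p.
Proof. apply continuous_const. Qed.

Lemma cont2_time (g : R -> R) p : continuous g (fst p) -> cont2 (fun t _ => g t) p.
Proof. intro hg; destruct p as [t x]; exact (continuous_comp fst g (t, x) (continuous_fst t x) hg). Qed.

Lemma cont2_comp (g : R -> R) f p : cont2 f p -> continuous g (f (fst p) (snd p)) ->
  cont2 (fun t x => g (f t x)) p.
Proof. intros hf hg; exact (continuous_comp _ g p hf hg). Qed.

Lemma cont2_scaled_space (B : R -> R) p : continuous B (fst p) -> cont2 (fun t x => x * B t) p.
Proof.
  intro hB; apply (cont2_mult (fun _ x => x) (fun t _ => B t)); [|exact (cont2_time B p hB)].
  destruct p as [t x]; apply continuous_snd.
Qed.

Lemma C12_continuous phi phit phix phixx : C12 phi phit phix phixx -> forall p, cont2 phi p.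
Proof. intros [_ [_ [_ [h _]]]]; exact h. Qed.

Lemma C12_ext (phi phit phix phixx psi psit psix psixx : R -> R -> R) :
  (forall t x, phi t x = psi t x) -> (forall t x, phit t x = psit t x) ->
  (forall t x, phix t x = psix t x) -> (forall t x, phixx t x = psixx t x) ->
  C12 phi phit phix phixx -> C12 psi psit psix psixx.
Proof.
  intros e e_t e_x e_xx.
  replace psi with phi by (do 2 (apply functional_extensionality; intro); apply e).
  replace psit with phit by (do 2 (apply functional_extensionality; intro); apply e_t).
  replace psix with phix by (do 2 (apply functional_extensionality; intro); apply e_x).
  replace psixx with phixx by (do 2 (apply functional_extensionality; intro); apply e_xx).
  trivial.
Qed.

Lemma C12_lin (f ft fx fxx g gt gx gxx : R -> R -> R) (a b c : R) :
  C12 f ft fx fxx -> C12 g gt gx gxx ->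
  C12 (fun t x => a * f t x + b * g t x + c) (fun t x => a * ft t x + b * gt t x)
      (fun t x => a * fx t x + b * gx t x) (fun t x => a * fxx t x + b * gxx t x).
Proof.
  intros [f_t [f_x [f_xx [cf [cft [cfx cfxx]]]]]] [g_t [g_x [g_xx [cg [cgt [cgx cgxx]]]]]].
  assert (hcomb : forall (h k : R -> R -> R) p, cont2 h p -> cont2 k p ->
    cont2 (fun t x => a * h t x + b * k t x) p).
  { intros h k p hh hk; apply cont2_plus; apply cont2_mult; auto using cont2_const. }
  split; [intros t x; apply is_derive_affine; auto|].
  split; [intros t x; apply is_derive_affine; auto|].
  split.
  { intros t x.
    apply (is_derive_ext (fun y => a * fx t y + b * gx t y + 0)); [intro y; apply Rplus_0_r|].
    apply is_derive_affine; auto. }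
  split; [intro p; exact (cont2_plus _ _ p (hcomb f g p (cf p) (cg p)) (cont2_const c p))|].
  split; [intro p; exact (hcomb ft gt p (cft p) (cgt p))|].
  split; intro p; [exact (hcomb fx gx p (cfx p) (cgx p))|exact (hcomb fxx gxx p (cfxx p) (cgxx p))].
Qed.

Lemma C12_opp (f ft fx fxx : R -> R -> R) :
  C12 f ft fx fxx ->
  C12 (fun t x => - f t x) (fun t x => - ft t x) (fun t x => - fx t x) (fun t x => - fxx t x).
Proof.
  intro hf; eapply C12_ext; [..|exact (C12_lin _ _ _ _ _ _ _ _ (-1) 0 0 hf hf)];
    intros; cbv beta; ring.
Qed.

Section ScaledProfile.

Variables (A A' B B' h h' h'' : R -> R).
Hypotheses (A_der : forall t, is_derive A t (A' t)) (A'_cont : forall t, continuous A' t).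
Hypotheses (B_der : forall t, is_derive B t (B' t)) (B'_cont : forall t, continuous B' t).
Hypotheses (h_der : forall y, is_derive h y (h' y)) (h'_der : forall y, is_derive h' y (h'' y)).
Hypothesis h''_cont : forall y, continuous h'' y.

Lemma C12_scaled_profile :
  C12 (fun t x => A t * h (x * B t))
      (fun t x => A' t * h (x * B t) + A t * (x * B' t) * h' (x * B t))
      (fun t x => A t * B t * h' (x * B t))
      (fun t x => A t * B t ^ 2 * h'' (x * B t)).
Proof.
  assert (cA : forall p, cont2 (fun t _ => A t) p).
  { intro p; apply cont2_time, (is_derive_continuous _ _ _ (A_der _)). }
  assert (cA' : forall p, cont2 (fun t _ => A' t) p) by (intro p; apply cont2_time, A'_cont).
  assert (cB : forall p, cont2 (fun t _ => B t) p).
  { intro p; apply cont2_time, (is_derive_continuous _ _ _ (B_der _)). }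
  assert (cB' : forall p, cont2 (fun t _ => B' t) p) by (intro p; apply cont2_time, B'_cont).
  assert (cY : forall p, cont2 (fun t x => x * B t) p).
  { intro p; apply cont2_scaled_space, (is_derive_continuous _ _ _ (B_der _)). }
  assert (cX : forall p, cont2 (fun _ x => x) p) by (intros [t x]; apply continuous_snd).
  assert (ch : forall (k : R -> R) p, (forall y, continuous k y) -> cont2 (fun t x => k (x * B t)) p).
  { intros k p hk; apply (cont2_comp k (fun t x => x * B t)); [apply cY|apply hk]. }
  assert (c_h : forall y, continuous h y) by (intro y; exact (is_derive_continuous _ _ _ (h_der y))).
  assert (c_h' : forall y, continuous h' y) by (intro y; exact (is_derive_continuous _ _ _ (h'_der y))).
  split.
  { intros t x; auto_derive.
    - repeat split; [exists (A' t)|exists (h' (x * B t))|exists (B' t)]; auto.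
    - replace (Derive (fun s => A s) t) with (A' t) by (symmetry; apply is_derive_unique, A_der).
      replace (Derive (fun s => B s) t) with (B' t) by (symmetry; apply is_derive_unique, B_der).
      replace (Derive (fun y => h y) (x * B t)) with (h' (x * B t))
        by (symmetry; apply is_derive_unique, h_der).
      ring. }
  split.
  { intros t x; auto_derive.
    - exists (h' (x * B t)); auto.
    - replace (Derive (fun y => h y) (x * B t)) with (h' (x * B t))
        by (symmetry; apply is_derive_unique, h_der).
      ring. }
  split.
  { intros t x; auto_derive.
    - exists (h'' (x * B t)); auto.
    - replace (Derive (fun y => h' y) (x * B t)) with (h'' (x * B t))
        by (symmetry; apply is_derive_unique, h'_der).
      ring. }
  split; [intro p; exact (cont2_mult _ _ p (cA p) (ch h p c_h))|].
  split.
  { intro p; change (cont2 (fun t x => A' t * h (x * B t) + A t * (x * B' t) * h' (x * B t)) p).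
    repeat apply cont2_mult || apply cont2_plus; auto. }
  split.
  { intro p; change (cont2 (fun t x => A t * B t * h' (x * B t)) p).
    repeat apply cont2_mult; auto. }
  intro p; change (cont2 (fun t x => A t * (B t * (B t * 1)) * h'' (x * B t)) p).
  repeat apply cont2_mult; auto using cont2_const.
Qed.

End ScaledProfile.

Definition poly_growth_on (T : R) (f : R -> R -> R) : Prop :=
  exists C k, forall t x, 0 <= t <= T -> Rabs (f t x) <= C * (1 + Rabs x ^ k).

Lemma poly_bound_coeff_ge0 (C v : R) (k : nat) : Rabs v <= C * (1 + Rabs 0 ^ k) -> 0 <= C.
Proof.
  intro h; pose proof (Rabs_pos v).
  assert (0 <= Rabs 0 ^ k) by (apply pow_le, Rabs_pos); nra.
Qed.

Lemma poly_growth_on_minus (T : R) (f g : R -> R -> R) : 0 <= T ->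
  poly_growth_on T f -> poly_growth_on T g -> poly_growth_on T (fun t x => f t x - g t x).
Proof.
  intros hT [C1 [k1 h1]] [C2 [k2 h2]].
  pose proof (poly_bound_coeff_ge0 _ _ _ (h1 0 0 ltac:(lra))).
  pose proof (poly_bound_coeff_ge0 _ _ _ (h2 0 0 ltac:(lra))).
  exists (2 * (C1 + C2)), (k1 + k2)%nat; intros t x ht.
  specialize (h1 t x ht); specialize (h2 t x ht).
  pose proof (Rabs_pow_le_1_plus x k1 (k1 + k2) ltac:(lia)).
  pose proof (Rabs_pow_le_1_plus x k2 (k1 + k2) ltac:(lia)).
  assert (0 <= Rabs x ^ (k1 + k2)) by (apply pow_le, Rabs_pos).
  pose proof (Rabs_triang (f t x) (- g t x)); rewrite Rabs_Ropp in *.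
  unfold Rminus; nra.
Qed.

Lemma cont_on_half_minus (u v : R -> R -> R) :
  cont_on_half u -> (forall p, cont2 v p) -> cont_on_half (fun t x => u t x - v t x).
Proof.
  intros hu hv t x ht.
  apply (@filterlim_comp_2 _ _ _ _ _ (locally (u t x)) (locally (- v t x)) _ _
    (fun p : R * R => u (fst p) (snd p)) (fun p : R * R => - v (fst p) (snd p)) Rplus).
  - exact (hu t x ht).
  - apply (filterlim_filter_le_1 (F := locally (t, x))); [apply filter_le_within|].
    exact (continuous_opp _ (t, x) (hv (t, x))).
  - exact (filterlim_plus (u t x) (- v t x)).
Qed.

Lemma cont_on_half_opp (u : R -> R -> R) : cont_on_half u -> cont_on_half (fun t x => - u t x).
Proof.
  intros hu t x ht.
  apply (filterlim_comp _ _ _ (fun p : R * R => u (fst p) (snd p)) Ropp _ (locally (u t x))).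
  - exact (hu t x ht).
  - apply (continuous_opp (fun y : R => y)), continuous_id.
Qed.

Lemma cont_on_half_usc (f : R -> R -> R) (a b c d : R) :
  cont_on_half f -> 0 <= a -> usc_on_rectangle f a b c d.
Proof.
  intros hf ha t x ht hx eps heps.
  destruct (hf t x ltac:(lra) (ball (f t x) eps) (locally_ball (f t x) (mkposreal eps heps))) as [del hdel].
  exists del; split; [apply cond_pos|].
  intros s y hs hy hst hyx.
  assert (h := hdel (s, y) (conj hst hyx) ltac:(simpl; lra)).
  change (Rabs (f s y - f t x) < eps) in h; apply Rabs_def2 in h; lra.
Qed.

Lemma cont_on_half_strip_max (Phi : R -> R -> R) (T R0 t1 x1 : R) :
  cont_on_half Phi -> 0 <= t1 <= T ->
  (forall t x, 0 <= t <= T -> R0 <= Rabs x -> Phi t x < Phi t1 x1) ->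
  exists t0 x0, 0 <= t0 <= T /\ forall t x, 0 <= t <= T -> Phi t x <= Phi t0 x0.
Proof.
  intros hPhi ht1 hfar.
  assert (hx1 : Rabs x1 < R0).
  { apply Rnot_le_lt; intro h; specialize (hfar t1 x1 ht1 h); lra. }
  pose proof (Rabs_pos x1).
  destruct (usc_rectangle_max Phi 0 T (- R0) R0 (cont_on_half_usc Phi 0 T (- R0) R0 hPhi (Rle_refl 0))
    ltac:(lra) ltac:(lra)) as [t0 [x0 [[ht0 hx0] hmax]]].
  assert (hnear : forall t x, 0 <= t <= T -> Rabs x < R0 -> Phi t x <= Phi t0 x0).
  { intros t x ht hx; apply Rabs_def2 in hx; apply hmax; lra. }
  exists t0, x0; split; [exact ht0|].
  intros t x ht; destruct (Rle_lt_dec R0 (Rabs x)) as [hfx|hnx].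
  - apply Rlt_le, Rlt_le_trans with (1 := hfar t x ht hfx), hnear; assumption.
  - apply hnear; assumption.
Qed.

Lemma cont_on_half_at_left (u : R -> R -> R) (t x : R) :
  cont_on_half u -> 0 < t -> filterlim (fun s => u s x) (at_left t) (locally (u t x)).
Proof.
  intros hu ht.
  apply (filterlim_comp _ _ _ (fun s => (s, x)) (fun p : R * R => u (fst p) (snd p)) _
    (within (fun p : R * R => 0 <= fst p) (locally (t, x)))); [|exact (hu t x (Rlt_le _ _ ht))].
  intros P [eps hP]; exists (mkposreal (Rmin eps t) (Rmin_pos _ _ (cond_pos eps) ht)); simpl.
  intros s hs hst; pose proof (Rmin_l eps t); pose proof (Rmin_r eps t).
  change (Rabs (s - t) < Rmin eps t) in hs; apply hP; simpl.
  - split; [change (Rabs (s - t) < eps); lra|change (Rabs (x - x) < eps)].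
    rewrite Rminus_diag, Rabs_R0; apply cond_pos.
  - apply Rabs_def2 in hs; lra.
Qed.

(** * Comparison with classical supersolutions *)

Lemma one_sided_lipschitz_dual (G : R -> R) (K : R) :
  (forall a b, 0 <= b -> G (a + b) <= G a + K * b) ->
  forall a b, 0 <= b -> - G (- (a + b)) <= - G (- a) + K * b.
Proof.
  intros hG a b hb; specialize (hG (- (a + b)) b hb).
  replace (- (a + b) + b) with (- a) in hG by ring; lra.
Qed.

Lemma visc_super_opp (G : R -> R) (u : R -> R -> R) :
  visc_super G u -> visc_sub (fun a => - G (- a)) (fun t x => - u t x).
Proof.
  intros hsup t x phi phit phix phixx ht hphi heq [d [hd htouch]].
  assert (hval : - phi t x = u t x) by (rewrite heq; ring).
  assert (hbelow : exists d, 0 < d /\ forall s y, 0 < s -> Rabs (s - t) < d ->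
    Rabs (y - x) < d -> - phi s y <= u s y).
  { exists d; split; [exact hd|]; intros s y hs hst hyx; specialize (htouch s y hs hst hyx); lra. }
  pose proof (hsup t x _ _ _ _ ht (C12_opp _ _ _ _ hphi) hval hbelow); lra.
Qed.

Definition penalty (lam : R) (m : nat) (t x : R) : R := exp (lam * t) * (1 + x ^ S (S (2 * m))).

Lemma penalty_C12 (lam : R) (m : nat) :
  C12 (penalty lam m) (fun t x => lam * penalty lam m t x)
    (fun t x => exp (lam * t) * (INR (S (S (2 * m))) * x ^ S (2 * m)))
    (fun t x => exp (lam * t) * (INR (S (S (2 * m))) * INR (S (2 * m)) * x ^ (2 * m))).
Proof.
  set (d := INR (S (S (2 * m)))); set (d' := INR (S (2 * m))).
  assert (hexp : forall t, is_derive (fun s => exp (lam * s)) t (lam * exp (lam * t))).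
  { intro t; auto_derive; auto; ring. }
  eapply C12_ext; [..|apply (C12_scaled_profile (fun t => exp (lam * t)) (fun t => lam * exp (lam * t))
      (fun _ => 1) (fun _ => 0) (fun y => 1 + y ^ S (S (2 * m))) (fun y => d * y ^ S (2 * m))
      (fun y => d * d' * y ^ (2 * m)))].
  - intros t x; unfold penalty; rewrite Rmult_1_r; reflexivity.
  - intros t x; unfold penalty; rewrite Rmult_1_r; ring.
  - intros t x; cbv beta; rewrite !Rmult_1_r; reflexivity.
  - intros t x; cbv beta; rewrite Rmult_1_r; simpl; ring.
  - exact hexp.
  - intro t; apply (continuous_scal_r lam (fun s => exp (lam * s))), (is_derive_continuous _ _ _ (hexp t)).
  - intro t; auto_derive; auto.
  - intro t; apply continuous_const.
  - intro y; auto_derive; auto; unfold d; simpl; ring.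
  - intro y; auto_derive; auto; unfold d, d'; simpl; ring.
  - intro y; apply (ex_derive_continuous (K := R_AbsRing) (V := R_NormedModule)); auto_derive; auto.
Qed.

Lemma penalty_pos (lam : R) (m : nat) (t x : R) : 0 < penalty lam m t x.
Proof.
  unfold penalty; pose proof (pow_SS_double_ge0 x m); pose proof (exp_pos (lam * t)); nra.
Qed.

Lemma penalty_ge_profile (lam : R) (m : nat) (t x : R) :
  0 <= lam * t -> 1 + x ^ S (S (2 * m)) <= penalty lam m t x.
Proof.
  intro h; unfold penalty; pose proof (pow_SS_double_ge0 x m).
  pose proof (exp_ineq1_le (lam * t)); nra.
Qed.

Lemma penalty_dominates_diffusion (K lam : R) (m : nat) (t x : R) :
  0 <= K -> K * (INR (S (S (2 * m))) * INR (S (2 * m))) < lam ->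
  K * (exp (lam * t) * (INR (S (S (2 * m))) * INR (S (2 * m)) * x ^ (2 * m)))
    < lam * penalty lam m t x.
Proof.
  intros hK hlam; unfold penalty.
  set (P := INR (S (S (2 * m))) * INR (S (2 * m))) in *.
  assert (hP : 0 <= P) by (apply Rmult_le_pos; apply pos_INR).
  assert (hx : x ^ (2 * m) <= 1 + x ^ S (S (2 * m))).
  { rewrite pow_even_Rabs, pow_SS_double; apply Rabs_pow_le_1_plus; lia. }
  pose proof (pow_even_ge0 x m); pose proof (pow_SS_double_ge0 x m); pose proof (exp_pos (lam * t)).
  assert (K * P * x ^ (2 * m) <= K * P * (1 + x ^ S (S (2 * m)))).
  { apply Rmult_le_compat_l; [apply Rmult_le_pos|]; assumption. }
  assert (K * P * (1 + x ^ S (S (2 * m))) < lam * (1 + x ^ S (S (2 * m)))).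
  { apply Rmult_lt_compat_r; lra. }
  nra.
Qed.

Lemma penalty_time_growth (lam : R) (m : nat) (s t x y : R) :
  penalty lam m s x * (1 + lam * (t - s)) * (1 + y ^ S (S (2 * m)))
    <= penalty lam m t y * (1 + x ^ S (S (2 * m))).
Proof.
  unfold penalty.
  replace (exp (lam * t)) with (exp (lam * s) * exp (lam * (t - s))) by (rewrite <- exp_plus; f_equal; ring).
  pose proof (exp_ineq1_le (lam * (t - s))); pose proof (exp_pos (lam * s)).
  pose proof (pow_SS_double_ge0 x m); pose proof (pow_SS_double_ge0 y m).
  assert (0 <= exp (lam * s) * (1 + x ^ S (S (2 * m))) * (1 + y ^ S (S (2 * m)))).
  { apply Rmult_le_pos; [apply Rmult_le_pos|]; lra. }
  nra.
Qed.

Lemma penalty_terminal_dominates (lam C eta s t x y : R) (m : nat) :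
  0 <= C -> 0 < eta -> 4 * C * (1 + x ^ S (S (2 * m))) / eta <= lam * (t - s) ->
  2 * C * (1 + y ^ S (S (2 * m))) < eta / (2 * penalty lam m s x) * penalty lam m t y.
Proof.
  intros hC heta hlam.
  set (qx := 1 + x ^ S (S (2 * m))); set (qy := 1 + y ^ S (S (2 * m))).
  change (1 + x ^ S (S (2 * m))) with qx in hlam.
  assert (hqx : 1 <= qx) by (pose proof (pow_SS_double_ge0 x m); unfold qx; lra).
  assert (hqy : 1 <= qy) by (pose proof (pow_SS_double_ge0 y m); unfold qy; lra).
  pose proof (penalty_pos lam m s x); pose proof (penalty_pos lam m t y).
  pose proof (penalty_time_growth lam m s t x y) as hgrow; fold qx qy in hgrow.
  set (eps := eta / (2 * penalty lam m s x)).
  assert (heps : eps * penalty lam m s x = eta / 2) by (unfold eps; field; lra).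
  assert (hgrow' : eta / 2 * (1 + lam * (t - s)) * qy <= eps * penalty lam m t y * qx).
  { rewrite <- heps.
    replace (eps * penalty lam m t y * qx) with (eps * (penalty lam m t y * qx)) by ring.
    replace (eps * penalty lam m s x * (1 + lam * (t - s)) * qy)
      with (eps * (penalty lam m s x * (1 + lam * (t - s)) * qy)) by ring.
    apply Rmult_le_compat_l; [unfold eps; apply Rlt_le, Rdiv_lt_0_compat; lra|exact hgrow]. }
  assert (eta / 2 * (1 + 4 * C * qx / eta) = eta / 2 + 2 * C * qx) by (field; lra).
  assert (eta / 2 * (1 + 4 * C * qx / eta) * qy <= eta / 2 * (1 + lam * (t - s)) * qy).
  { apply Rmult_le_compat_r; [lra|]; apply Rmult_le_compat_l; lra. }
  nra.
Qed.

Section Comparison.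

Variables (G : R -> R) (K : R).
Hypothesis K_ge0 : 0 <= K.
Hypothesis G_lip : forall a b, 0 <= b -> G (a + b) <= G a + K * b.
Variables (u w wt wx wxx : R -> R -> R) (T : R).
Hypothesis u_sub : visc_sub G u.
Hypothesis w_C12 : C12 w wt wx wxx.
Hypothesis w_super : forall t x, 0 < t < T -> G (wxx t x) <= wt t x.

Lemma penalized_no_interior_max (eps lam : R) (m : nat) (t0 x0 : R) :
  0 < eps -> K * (INR (S (S (2 * m))) * INR (S (2 * m))) < lam -> 0 < t0 < T ->
  ~ (forall t x, 0 <= t <= T ->
       u t x - w t x - eps * penalty lam m t x <= u t0 x0 - w t0 x0 - eps * penalty lam m t0 x0).
Proof.
  intros heps hlam ht0 hmax.
  set (M := u t0 x0 - w t0 x0 - eps * penalty lam m t0 x0).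
  pose proof (C12_lin _ _ _ _ _ _ _ _ 1 eps M w_C12 (penalty_C12 lam m)) as hphi.
  assert (htouch : exists d, 0 < d /\ forall s y, 0 < s -> Rabs (s - t0) < d -> Rabs (y - x0) < d ->
    u s y <= 1 * w s y + eps * penalty lam m s y + M).
  { exists (Rmin t0 (T - t0)); split; [apply Rmin_pos; lra|].
    intros s y hs hst _; pose proof (Rmin_r t0 (T - t0)); apply Rabs_def2 in hst.
    specialize (hmax s y ltac:(lra)); fold M in hmax; lra. }
  pose proof (u_sub t0 x0 _ _ _ _ (proj1 ht0) hphi ltac:(unfold M; ring) htouch) as hvisc.
  cbv beta in hvisc; rewrite !Rmult_1_l in hvisc.
  set (pxx := exp (lam * t0) * (INR (S (S (2 * m))) * INR (S (2 * m)) * x0 ^ (2 * m))) in hvisc.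
  assert (hpxx : 0 <= pxx).
  { apply Rmult_le_pos; [apply Rlt_le, exp_pos|].
    apply Rmult_le_pos; [apply Rmult_le_pos; apply pos_INR|apply pow_even_ge0]. }
  pose proof (G_lip (wxx t0 x0) (eps * pxx) ltac:(apply Rmult_le_pos; lra)).
  pose proof (w_super t0 x0 ht0).
  pose proof (penalty_dominates_diffusion K lam m t0 x0 K_ge0 hlam) as hdom; fold pxx in hdom.
  assert (K * (eps * pxx) < eps * (lam * penalty lam m t0 x0)).
  { replace (K * (eps * pxx)) with (eps * (K * pxx)) by ring; apply Rmult_lt_compat_l; assumption. }
  lra.
Qed.

Lemma cont_on_half_penalized (eps lam : R) (m : nat) :
  cont_on_half u -> cont_on_half (fun t x => u t x - w t x - eps * penalty lam m t x).
Proof.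
  intro hu.
  replace (fun t x => u t x - w t x - eps * penalty lam m t x)
    with (fun t x => u t x - (w t x + eps * penalty lam m t x))
    by (do 2 (apply functional_extensionality; intro); ring).
  apply cont_on_half_minus; [exact hu|intro p].
  apply cont2_plus; [apply (C12_continuous _ _ _ _ w_C12)|].
  apply cont2_mult; [apply cont2_const|apply (C12_continuous _ _ _ _ (penalty_C12 lam m))].
Qed.

Theorem comparison_principle :
  0 < T -> cont_on_half u -> poly_growth_on T (fun t x => u t x - w t x) ->
  (forall x, u 0 x <= w 0 x) -> forall t x, 0 <= t < T -> u t x <= w t x.
Proof.
  intros hT hu [C [k hC]] h0 t1 x1 ht1.
  apply Rnot_lt_le; intro hlt.
  set (eta := u t1 x1 - w t1 x1).
  assert (heta : 0 < eta) by (unfold eta; lra).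
  pose proof (poly_bound_coeff_ge0 _ _ _ (hC 0 0 ltac:(lra))) as hC0.
  set (P := INR (S (S (2 * k))) * INR (S (2 * k))).
  assert (hKP : 0 <= K * P) by (apply Rmult_le_pos; [|apply Rmult_le_pos; apply pos_INR]; lra).
  (* lam > K P makes the penalty a strict supersolution; the second bound makes it beat the
     growth of u - w at time T. *)
  destruct (exists_rate_above (K * P) (4 * C * (1 + x1 ^ S (S (2 * k))) / eta) (T - t1) ltac:(lra))
    as [lam [hlam hlamT]].
  pose proof (penalty_pos lam k t1 x1).
  set (eps := eta / (2 * penalty lam k t1 x1)).
  assert (heps : 0 < eps) by (apply Rdiv_lt_0_compat; lra).
  set (Phi := fun t x => u t x - w t x - eps * penalty lam k t x).
  assert (hPhi1 : Phi t1 x1 = eta / 2) by (unfold Phi, eps; fold eta; field; lra).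
  assert (hPhi0 : forall x, Phi 0 x < 0).
  { intro x; pose proof (h0 x); pose proof (penalty_pos lam k 0 x).
    assert (0 < eps * penalty lam k 0 x) by (apply Rmult_lt_0_compat; lra).
    unfold Phi; lra. }
  assert (hbound : forall t x, 0 <= t <= T -> u t x - w t x <= C * (1 + Rabs x ^ k)).
  { intros t x ht; pose proof (Rle_abs (u t x - w t x)); pose proof (hC t x ht); lra. }
  assert (hPhiT : forall x, Phi T x < 0).
  { intro x; pose proof (hbound T x ltac:(lra)); pose proof (poly_bound_le_even_power C k x hC0).
    pose proof (penalty_terminal_dominates lam C eta t1 T x1 x k hC0 heta hlamT) as hdom.
    fold eps in hdom; unfold Phi; lra. }
  assert (hfar : forall t x, 0 <= t <= T -> 1 + 2 * C / eps <= Rabs x -> Phi t x < Phi t1 x1).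
  { intros t x ht hx; pose proof (hbound t x ht).
    pose proof (poly_bound_below_higher_power C eps k (S (S (2 * k))) x hC0 heps ltac:(lia) hx).
    rewrite <- pow_SS_double in *.
    pose proof (penalty_ge_profile lam k t x ltac:(apply Rmult_le_pos; lra)).
    unfold Phi in *; nra. }
  destruct (cont_on_half_strip_max Phi T _ t1 x1 (cont_on_half_penalized eps lam k hu) ltac:(lra) hfar)
    as [t0 [x0 [ht0 hmax]]].
  assert (hM : eta / 2 <= Phi t0 x0) by (rewrite <- hPhi1; apply hmax; lra).
  apply (penalized_no_interior_max eps lam k t0 x0 heps hlam); [|exact hmax].
  split; apply Rnot_ge_lt; intro hb.
  - replace t0 with 0 in hM by lra; pose proof (hPhi0 x0); lra.
  - replace t0 with T in hM by lra; pose proof (hPhiT x0); lra.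
Qed.

End Comparison.

(** * The self-similar solution *)

Lemma Gfun_pos_homogeneous (sl su c a : R) : 0 <= c -> Gfun sl su (c * a) = c * Gfun sl su a.
Proof.
  intro hc; unfold Gfun.
  destruct (Rle_dec 0 a).
  - rewrite (Rmax_left (c * a)), (Rmax_left a), (Rmax_right (- (c * a))), (Rmax_right (- a)) by nra.
    ring.
  - rewrite (Rmax_right (c * a)), (Rmax_right a), (Rmax_left (- (c * a))), (Rmax_left (- a)) by nra.
    ring.
Qed.

Lemma Gfun_one_sided_lipschitz (sl su a b : R) :
  0 <= b -> Gfun sl su (a + b) <= Gfun sl su a + (sl ^ 2 + su ^ 2) / 2 * b.
Proof.
  intro hb; unfold Gfun.
  assert (0 <= sl ^ 2) by (simpl; nra); assert (0 <= su ^ 2) by (simpl; nra).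
  unfold Rmax; repeat destruct Rle_dec; nra.
Qed.

(* ln (1 - t) for t <= a, continued affinely and C^1 past a < 1, so that the self-similar
   solution below is C^{1,2} on the whole plane. *)
Definition ln_1m_ext (a t : R) : R := ln (1 - Rmin t a) - Rmax (t - a) 0 / (1 - a).

Definition ln_1m_ext' (a t : R) : R := - / (1 - Rmin t a).

Lemma ln_1m_ext_le (a t : R) : t <= a -> ln_1m_ext a t = ln (1 - t).
Proof.
  intro h; unfold ln_1m_ext; rewrite Rmin_left, Rmax_right by lra; unfold Rdiv; ring.
Qed.

Lemma ln_1m_ext_ge (a t : R) : a <= t -> ln_1m_ext a t = ln (1 - a) - (t - a) / (1 - a).
Proof. intro h; unfold ln_1m_ext; rewrite Rmin_right, Rmax_left by lra; reflexivity. Qed.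

Lemma is_derive_ln_1m_ext (a t : R) : a < 1 -> is_derive (ln_1m_ext a) t (ln_1m_ext' a t).
Proof.
  intro ha.
  assert (dleft : forall s, s < 1 -> is_derive (fun z => ln (1 - z)) s (- / (1 - s))).
  { intros s hs; auto_derive; [lra|field; lra]. }
  assert (dright : forall s, is_derive (fun z => ln (1 - a) - (z - a) / (1 - a)) s (- / (1 - a))).
  { intro s; auto_derive; [lra|field; lra]. }
  unfold ln_1m_ext'; destruct (Rlt_or_le t a) as [hlt|hge].
  - rewrite Rmin_left by lra; apply (is_derive_ext_loc (fun z => ln (1 - z))); [|apply dleft; lra].
    exists (mkposreal (a - t) ltac:(lra)); intros s hs; change (Rabs (s - t) < a - t) in hs.
    apply Rabs_def2 in hs; symmetry; apply ln_1m_ext_le; lra.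
  - rewrite Rmin_right by lra; destruct (Rle_lt_or_eq_dec a t hge) as [hgt|<-].
    + apply (is_derive_ext_loc (fun z => ln (1 - a) - (z - a) / (1 - a))); [|apply dright].
      exists (mkposreal (t - a) ltac:(lra)); intros s hs; change (Rabs (s - t) < t - a) in hs.
      apply Rabs_def2 in hs; symmetry; apply ln_1m_ext_ge; lra.
    + apply (is_derive_glue _ (fun z => ln (1 - z)) (fun z => ln (1 - a) - (z - a) / (1 - a)));
        [apply ln_1m_ext_le|apply ln_1m_ext_ge|apply dleft; exact ha|apply dright].
Qed.

Lemma continuous_ln_1m_ext' (a t : R) : a < 1 -> continuous (ln_1m_ext' a) t.
Proof.
  intro ha; apply (continuous_comp (fun s => Rmin s a) (fun z => - / (1 - z))).
  - apply continuous_Rmin_r.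
  - assert (Rmin t a <= a) by apply Rmin_r.
    apply (ex_derive_continuous (K := R_AbsRing) (V := R_NormedModule)); auto_derive; lra.
Qed.

Definition self_similar (rho a : R) (H : R -> R) (t x : R) : R :=
  exp (rho * ln_1m_ext a t) * H (x * exp (- ln_1m_ext a t / 2)).

Lemma self_similar_le (rho a : R) (H : R -> R) (t x : R) :
  t <= a -> self_similar rho a H t x = exp (rho * ln (1 - t)) * H (x * exp (- ln (1 - t) / 2)).
Proof. intro h; unfold self_similar; rewrite ln_1m_ext_le by exact h; reflexivity. Qed.

Lemma self_similar_initial (rho a : R) (H : R -> R) (x : R) : 0 <= a -> self_similar rho a H 0 x = H x.
Proof.
  intro ha; rewrite self_similar_le by exact ha.
  rewrite Rminus_0_r, ln_1, Rmult_0_r, Ropp_0, Rdiv_0_l, exp_0, Rmult_1_l, Rmult_1_r; reflexivity.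
Qed.

Lemma self_similar_classical_solution (sl su rho a : R) (H : R -> R) :
  a < 1 -> (forall y, ex_derive H y) -> (forall y, ex_derive (Derive H) y) ->
  (forall y, continuous (Derive_n H 2) y) ->
  (forall y, y / 2 * Derive H y - Gfun sl su (Derive_n H 2 y) = rho * H y) ->
  exists wt wx wxx, C12 (self_similar rho a H) wt wx wxx /\
    forall t x, t <= a -> wt t x = Gfun sl su (wxx t x).
Proof.
  intros ha hd1 hd2 hc2 hode.
  set (L := ln_1m_ext a); set (L' := ln_1m_ext' a).
  assert (dL : forall t, is_derive L t (L' t)) by (intro t; apply is_derive_ln_1m_ext, ha).
  assert (cL : forall t, continuous L t) by (intro t; exact (is_derive_continuous _ _ _ (dL t))).
  assert (cL' : forall t, continuous L' t) by (intro t; apply continuous_ln_1m_ext', ha).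
  assert (dexp : forall c t, is_derive (fun s => exp (c * L s)) t (c * L' t * exp (c * L t))).
  { intros c t; auto_derive; [exists (L' t); apply dL|].
    replace (Derive (fun s => L s) t) with (L' t) by (symmetry; apply is_derive_unique, dL); ring. }
  assert (cexp' : forall c t, continuous (fun s => c * L' s * exp (c * L s)) t).
  { intros c t; apply (continuous_mult (fun s => c * L' s)).
    - apply (continuous_scal_r c L'), cL'.
    - apply (continuous_comp (fun s => c * L s) exp); [apply (continuous_scal_r c L), cL|].
      apply (ex_derive_continuous (K := R_AbsRing) (V := R_NormedModule)); auto_derive; auto. }
  pose proof (C12_scaled_profile (fun t => exp (rho * L t)) (fun t => rho * L' t * exp (rho * L t))
    (fun t => exp (- / 2 * L t)) (fun t => - / 2 * L' t * exp (- / 2 * L t))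
    H (Derive H) (Derive (Derive H)) (dexp rho) (cexp' rho) (dexp (- / 2)) (cexp' (- / 2))
    (fun y => Derive_correct _ _ (hd1 y)) (fun y => Derive_correct _ _ (hd2 y)) hc2) as hC12.
  eexists; eexists; eexists; split.
  { eapply C12_ext; [..|exact hC12]; intros; try reflexivity.
    unfold self_similar; fold L; replace (- L t / 2) with (- / 2 * L t) by field; reflexivity. }
  intros t x ht; cbv beta.
  assert (h1t : 0 < 1 - t) by lra.
  assert (hL' : L' t = - / (1 - t)) by (unfold L', ln_1m_ext'; rewrite Rmin_left by lra; reflexivity).
  assert (hB2 : exp (- / 2 * L t) ^ 2 = / (1 - t)).
  { unfold L; rewrite ln_1m_ext_le by lra.
    replace (exp (- / 2 * ln (1 - t)) ^ 2) with (exp (- ln (1 - t)))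
      by (simpl; rewrite Rmult_1_r, <- exp_plus; f_equal; field).
    rewrite exp_Ropp, exp_ln by lra; reflexivity. }
  rewrite hB2, hL', Gfun_pos_homogeneous
    by (apply Rmult_le_pos; [apply Rlt_le, exp_pos|apply Rlt_le, Rinv_0_lt_compat; lra]).
  set (y := x * exp (- / 2 * L t)).
  specialize (hode y); change (Derive_n H 2 y) with (Derive (Derive H) y) in hode.
  replace (Gfun sl su (Derive (Derive H) y)) with (y / 2 * Derive H y - rho * H y) by lra.
  unfold y; field; lra.
Qed.

Lemma self_similar_poly_growth (rho a : R) (H : R -> R) :
  0 <= a < 1 -> 0 <= rho -> poly_growth H -> poly_growth_on a (self_similar rho a H).
Proof.
  intros ha hrho [C [k hC]].
  pose proof (poly_bound_coeff_ge0 _ _ _ (hC 0)) as hC0.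
  set (Ba := exp (- ln (1 - a) / 2)).
  assert (hlna : ln (1 - a) <= 0) by (rewrite <- ln_1; apply ln_le; lra).
  assert (hBa : 1 <= Ba) by (pose proof (exp_ineq1_le (- ln (1 - a) / 2)); unfold Ba; lra).
  exists (C * Ba ^ k), k; intros t x ht.
  rewrite self_similar_le by lra.
  set (B := exp (- ln (1 - t) / 2)).
  assert (hlnt : ln (1 - a) <= ln (1 - t) <= 0).
  { split; [apply ln_le; lra|rewrite <- ln_1; apply ln_le; lra]. }
  assert (hB : 0 < B <= Ba) by (split; [apply exp_pos|apply exp_le_compat; lra]).
  assert (hE : 0 < exp (rho * ln (1 - t)) <= 1).
  { split; [apply exp_pos|apply exp_le_1; nra]. }
  specialize (hC (x * B)); rewrite Rabs_mult, (Rabs_pos_eq B), Rpow_mult_distr in hC by lra.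
  rewrite Rabs_mult, (Rabs_pos_eq (exp _)) by lra.
  assert (B ^ k <= Ba ^ k) by (apply pow_incr; lra).
  assert (1 <= Ba ^ k) by (apply pow_R1_Rle; lra).
  assert (0 <= Rabs x ^ k) by (apply pow_le, Rabs_pos).
  pose proof (Rabs_pos (H (x * B))).
  assert (Rabs x ^ k * B ^ k <= Rabs x ^ k * Ba ^ k) by (apply Rmult_le_compat_l; lra).
  nra.
Qed.

Lemma G_heat_solution_eq_self_similar (sl su rho : R) (H : R -> R) (u : R -> R -> R) :
  0 < rho -> (forall y, ex_derive H y) -> (forall y, ex_derive (Derive H) y) ->
  (forall y, continuous (Derive_n H 2) y) -> poly_growth H ->
  (forall y, y / 2 * Derive H y - Gfun sl su (Derive_n H 2 y) = rho * H y) ->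
  G_heat_solution (Gfun sl su) H u ->
  forall t x, 0 <= t < 1 -> u t x = exp (rho * ln (1 - t)) * H (x * exp (- ln (1 - t) / 2)).
Proof.
  intros hrho hd1 hd2 hc2 hgrowth hode [hu [hug [hu0 [hsub hsup]]]] t1 x1 ht1.
  set (a := (1 + t1) / 2).
  destruct (self_similar_classical_solution sl su rho a H ltac:(unfold a; lra) hd1 hd2 hc2 hode)
    as [wt [wx [wxx [hW hpde]]]].
  set (W := self_similar rho a H) in *.
  set (K := (sl ^ 2 + su ^ 2) / 2).
  assert (hK : 0 <= K) by (unfold K; simpl; nra).
  pose proof (Gfun_one_sided_lipschitz sl su) as hlip; fold K in hlip.
  assert (hgap : poly_growth_on a (fun t x => u t x - W t x)).
  { apply poly_growth_on_minus; [unfold a; lra|apply hug|].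
    apply self_similar_poly_growth; [unfold a; lra|lra|exact hgrowth]. }
  assert (hinit : forall x, u 0 x = W 0 x).
  { intro x; rewrite hu0; symmetry; apply self_similar_initial; unfold a; lra. }
  assert (hup : u t1 x1 <= W t1 x1).
  { apply (comparison_principle (Gfun sl su) K hK hlip u W wt wx wxx a hsub hW);
      [intros t x ht; rewrite hpde; lra|unfold a; lra|exact hu|exact hgap|
       intro x; rewrite hinit; lra|unfold a; lra]. }
  assert (hlow : - u t1 x1 <= - W t1 x1).
  { apply (comparison_principle (fun b => - Gfun sl su (- b)) K hK (one_sided_lipschitz_dual _ _ hlip)
      (fun t x => - u t x) _ _ _ _ a (visc_super_opp _ _ hsup) (C12_opp _ _ _ _ hW)).
    - intros t x ht; cbv beta; rewrite Ropp_involutive, hpde; lra.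
    - unfold a; lra.
    - apply cont_on_half_opp, hu.
    - destruct hgap as [C [k hC]]; exists C, k; intros t x ht.
      replace (- u t x - - W t x) with (- (u t x - W t x)) by ring.
      rewrite Rabs_Ropp; apply hC, ht.
    - intro x; rewrite hinit; lra.
    - unfold a; lra. }
  rewrite <- self_similar_le with (a := a) by (unfold a; lra); fold W; lra.
Qed.

(** * Letting t tend to 1 *)

Lemma filterlim_1m_at_left : filterlim (fun t => 1 - t) (at_left 1) (at_right 0).
Proof.
  intros P [eps hP]; exists eps; intros t ht hlt; apply hP; [|lra].
  change (Rabs (t - 1) < eps) in ht; change (Rabs (1 - t - 0) < eps).
  rewrite <- Rabs_Ropp; replace (- (1 - t - 0)) with (t - 1) by ring; exact ht.
Qed.

Lemma filterlim_pow_1m_at_left (rho c : R) : 0 < rho ->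
  filterlim (fun t => exp (rho * ln (1 - t)) * c) (at_left 1) (locally 0).
Proof.
  intro hrho.
  assert (hlim : filterlim (fun t => exp (rho * ln (1 - t))) (at_left 1) (locally 0)).
  { apply (filterlim_comp _ _ _ (fun t => rho * ln (1 - t)) exp _ (Rbar_locally m_infty)); [|exact is_lim_exp_m].
    apply (filterlim_comp _ _ _ (fun t => ln (1 - t)) (fun z => rho * z) _ (Rbar_locally m_infty)).
    - apply (filterlim_comp _ _ _ (fun t => 1 - t) ln _ (at_right 0)); [apply filterlim_1m_at_left|exact is_lim_ln_0].
    - intros P [M hP]; exists (M / rho); intros z hz; apply hP.
      apply Rmult_lt_reg_r with (/ rho); [apply Rinv_0_lt_compat, hrho|].
      replace (rho * z * / rho) with z by (field; lra); exact hz. }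
  rewrite <- (Rmult_0_l c).
  apply (filterlim_comp _ _ _ (fun t => exp (rho * ln (1 - t))) (fun y => y * c) _ (locally 0) _ hlim).
  apply (continuous_mult (fun y => y) (fun _ => c)); [apply continuous_id|apply continuous_const].
Qed.

Theorem corollary5p2 (sl su rho : R) (H : R -> R)
  (hsl : 0 <= sl) (hslu : sl <= su) (hrho : 0 < rho)
  (hd1 : forall x, ex_derive H x)
  (hd2 : forall x, ex_derive (Derive H) x)
  (hc2 : forall x, continuous (Derive_n H 2) x)
  (hgrowth : poly_growth H)
  (hode : forall x, x / 2 * Derive H x - Gfun sl su (Derive_n H 2 x) = rho * H x) :
  NG_value (Gfun sl su) H 0.
Proof.
  intros u hsol.
  pose proof (G_heat_solution_eq_self_similar sl su rho H u hrho hd1 hd2 hc2 hgrowth hode hsol) as hself.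
  apply (filterlim_locally_unique (F := at_left 1) (fun t => u t 0)).
  - apply cont_on_half_at_left; [apply hsol|lra].
  - apply (filterlim_ext_loc (fun t => exp (rho * ln (1 - t)) * H 0)).
    + exists (mkposreal 1 Rlt_0_1); intros t ht hlt.
      change (Rabs (t - 1) < 1) in ht; apply Rabs_def2 in ht.
      rewrite hself, Rmult_0_l by lra; reflexivity.
    + apply filterlim_pow_1m_at_left, hrho.
Qed.
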